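(* Let $m$ be a positive integer, $\alpha>0$ and $\beta_1,\beta_2>0$. Then $$\int_0^{\infty}e^{-\alpha x}J_0(\beta_1\sqrt{x})J_m(\beta_2\sqrt{x})\,x^{m/2}\,dx=\frac1\alpha e^{-\beta_2^2/4\alpha}\left.\left(\frac{d}{dx}\right)^{m}\left[e^{-x}\left(\frac{x}{\alpha}\right)^{m/2}I_m\!\left(\beta_2\sqrt{\frac{x}{\alpha}}\right)\right]\right|_{x=\beta_1^2/4\alpha}$$ $$=\frac1\alpha\left(\frac{\beta_2}{2\alpha}\right)^{m}e^{-\frac{\beta_1^2+\beta_2^2}{4\alpha}}\sum_{n=0}^{m}(-1)^n\binom{m}{n}\left(\frac{\beta_1}{\beta_2}\right)^{n}I_n\!\left(\frac{\beta_1\beta_2}{2\alpha}\right).$$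
   Context: $J_k$ and $I_k$ denote the Bessel and modified Bessel functions of the first kind of integer order $k$. *)

From Stdlib Require Import Reals.
From Coquelicot Require Import Coquelicot.
Open Scope R_scope.

Definition BesselJ (k : nat) (x : R) : R :=
  Series (fun j : nat =>
    (-1) ^ j / (INR (Factorial.fact j) * INR (Factorial.fact (j + k))) * (x / 2) ^ (2 * j + k)).

Definition BesselI (k : nat) (x : R) : R :=
  Series (fun j : nat =>
    / (INR (Factorial.fact j) * INR (Factorial.fact (j + k))) * (x / 2) ^ (2 * j + k)).

(* Expanding [J_0 (b1 sqrt x)] and [J_m (b2 sqrt x) sqrt x ^ m] in powers of [x] turns the integrand
   into a double series of terms [exp (- a x) x ^ n], whose integrals are [n! / a ^ (n + 1)]; both
   expansions may be integrated termwise since their terms are dominated by a summable family of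
   multiples of [exp (- a x / 2)].  With [X = b1^2 / 4a], [Y = b2^2 / 4a] and
   [P_q(x) = sum_(p >= q) Y^(p-q) x^p / ((p-q)! p!) = (x/Y)^(q/2) I_q (2 sqrt (x Y))],
   two Cauchy products with the exponential series, together with the alternating binomial sums
   [sum_k (-1)^k C(t,k) C(k+p,q) = (-1)^t C(p,q-t)] (for [t <= q], and [0] otherwise), turn the
   double series into [(b2/2a)^m / a * exp (- X - Y) * sum_n (-1)^n C(m,n) P_n(X)].  As
   [P_(q+1)' = P_q], the last sum is [exp X] times the [m]-th derivative of [exp (- x) P_m(x)] at
   [X], which is the first closed form, and [P_n(X) = (b1/b2)^n I_n(b1 b2 / 2a)] gives the second. *)

From Stdlib Require Import Reals Lra Lia Factorial.
From Coquelicot Require Import Coquelicot.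
Open Scope R_scope.

(** * Binomial coefficients and finite differences *)

(* Unlike [Binomial.C n k], [binom n k] vanishes for [k > n]. *)
Fixpoint binom (n k : nat) : nat :=
  match n, k with
  | _, O => 1%nat
  | O, S _ => 0%nat
  | S n', S k' => (binom n' k' + binom n' (S k'))%nat
  end.

Lemma binom_0_r n : binom n 0 = 1%nat.
Proof. now destruct n. Qed.

Lemma binom_gt n k : (n < k)%nat -> binom n k = 0%nat.
Proof.
  revert k; induction n; intros k Hk; destruct k; simpl; try lia; auto.
  rewrite !IHn; lia.
Qed.

Lemma binom_diag n : binom n n = 1%nat.
Proof. induction n; simpl; auto. rewrite IHn, binom_gt; lia. Qed.

Lemma INR_binom n k : (k <= n)%nat -> INR (binom n k) = Binomial.C n k.
Proof.
  revert k; induction n; intros k Hk.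
  - replace k with 0%nat by lia. simpl. now rewrite C_n_0.
  - destruct k as [|k]; [simpl; now rewrite C_n_0|].
    simpl binom. rewrite plus_INR.
    destruct (Nat.eq_dec k n) as [->|Hne].
    + rewrite binom_diag, binom_gt, C_n_n by lia. simpl. ring.
    + rewrite !IHn by lia. apply pascal. lia.
Qed.

Lemma binom_sym a b : binom (a + b) a = binom (a + b) b.
Proof.
  apply INR_eq. rewrite !INR_binom by lia. rewrite pascal_step1 by lia.
  f_equal. lia.
Qed.

Lemma binom_le_pow2 n k : (binom n k <= 2 ^ n)%nat.
Proof.
  revert k; induction n as [|n IHn]; intros [|k]; simpl; try lia.
  - pose proof (IHn 0%nat) as H. rewrite binom_0_r in H. lia.
  - pose proof (IHn k); pose proof (IHn (S k)); lia.
Qed.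

Lemma INR_fact_pos n : 0 < INR (fact n).
Proof. apply lt_0_INR, lt_O_fact. Qed.

Lemma fact_add_le p q : INR (fact (p + q)) <= 2 ^ (p + q) * INR (fact p) * INR (fact q).
Proof.
  pose proof (INR_fact_pos p); pose proof (INR_fact_pos q).
  assert (Hb : INR (binom (p + q) p) <= 2 ^ (p + q)).
  { rewrite <- (pow_INR 2). apply le_INR, binom_le_pow2. }
  assert (Hf : INR (fact (p + q)) = INR (binom (p + q) p) * INR (fact p) * INR (fact q)).
  { rewrite INR_binom by lia. unfold Binomial.C. replace (p + q - p)%nat with q by lia.
    field. lra. }
  rewrite Hf. apply Rmult_le_compat_r; [lra|]. apply Rmult_le_compat_r; lra.
Qed.

Lemma sum_f_R0_S_l (f : nat -> R) n : sum_f_R0 f (S n) = f O + sum_f_R0 (fun j => f (S j)) n.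
Proof. exact (decomp_sum f (S n) (Nat.lt_0_succ n)). Qed.

Lemma sum_f_R0_mult_l (c : R) (f : nat -> R) N :
  sum_f_R0 (fun n => c * f n) N = c * sum_f_R0 f N.
Proof. induction N as [|N IHN]; simpl; [|rewrite IHN]; ring. Qed.

Lemma sum_f_R0_zero_tail (f : nat -> R) N0 N : (N0 <= N)%nat ->
  (forall n, (N0 < n)%nat -> f n = 0) -> sum_f_R0 f N = sum_f_R0 f N0.
Proof.
  intros HN Hf. induction N as [|N IHN]; [now replace N0 with 0%nat by lia|].
  destruct (Nat.eq_dec N0 (S N)) as [->|Hne]; [reflexivity|].
  simpl. rewrite IHN, (Hf (S N)) by lia. ring.
Qed.

Lemma sum_f_R0_rev (f : nat -> R) N : sum_f_R0 (fun i => f (N - i)%nat) N = sum_f_R0 f N.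
Proof.
  induction N as [|N IHN]; [reflexivity|].
  rewrite sum_f_R0_S_l, Nat.sub_0_r, (sum_eq _ (fun i => f (N - i)%nat)) by (intros; f_equal; lia).
  rewrite IHN, tech5. ring.
Qed.

(* [alt_sum n g] is the [n]-th finite difference [((1 - E) ^ n g) 0], [E] the shift. *)
Definition alt_sum (n : nat) (g : nat -> R) : R :=
  sum_f_R0 (fun j => (-1) ^ j * INR (binom n j) * g j) n.

Lemma alt_sum_ext n f g : (forall j, f j = g j) -> alt_sum n f = alt_sum n g.
Proof. intros H. apply sum_eq. intros j _. now rewrite H. Qed.

Lemma alt_sum_plus n f g : alt_sum n (fun j => f j + g j) = alt_sum n f + alt_sum n g.
Proof. unfold alt_sum. rewrite <- plus_sum. apply sum_eq. intros; ring. Qed.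

Lemma alt_sum_S n g : alt_sum (S n) g = alt_sum n g - alt_sum n (fun j => g (S j)).
Proof.
  set (G := fun j => (-1) ^ j * INR (binom n j) * g j).
  assert (Hlast : sum_f_R0 G (S n) = alt_sum n g).
  { change (sum_f_R0 G n + G (S n) = alt_sum n g).
    unfold G at 2. rewrite binom_gt by lia. rewrite Rmult_0_r, Rmult_0_l, Rplus_0_r. reflexivity. }
  unfold alt_sum. rewrite sum_f_R0_S_l, binom_0_r.
  rewrite (sum_eq _ (fun j => G (S j) - (-1) ^ j * INR (binom n j) * g (S j))).
  - rewrite minus_sum. fold (alt_sum n g). rewrite <- Hlast, sum_f_R0_S_l.
    unfold G. rewrite binom_0_r. simpl. ring.
  - intros j _. unfold G. simpl binom. rewrite plus_INR. simpl. ring.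
Qed.

Lemma alt_sum_const n c : alt_sum (S n) (fun _ => c) = 0.
Proof. rewrite alt_sum_S. ring. Qed.

Lemma alt_sum_binom i p t :
  alt_sum i (fun j => INR (binom (j + p) t)) =
  if (i <=? t)%nat then (-1) ^ i * INR (binom p (t - i)) else 0.
Proof.
  revert p t; induction i as [|i IHi]; intros p t.
  - unfold alt_sum. simpl. rewrite Nat.sub_0_r. destruct t; simpl; ring.
  - destruct t as [|t].
    + simpl. rewrite <- (alt_sum_const i 1). apply alt_sum_ext. intro. now rewrite binom_0_r.
    + rewrite alt_sum_S.
      rewrite (alt_sum_ext i (fun j => INR (binom (S j + p) (S t)))
                 (fun j => INR (binom (j + p) t) + INR (binom (j + p) (S t))))
        by (intro j; rewrite <- plus_INR; reflexivity).
      rewrite alt_sum_plus, !IHi. simpl (S i <=? S t)%nat. replace (S t - S i)%nat with (t - i)%nat by lia.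
      destruct (i <=? t)%nat; simpl; ring.
Qed.

Lemma alt_sum_binom_diag t p : alt_sum t (fun k => INR (binom (k + p) p)) = (-1) ^ t * INR (binom p t).
Proof.
  rewrite alt_sum_binom. destruct (Nat.leb_spec t p) as [Htp|Hpt].
  - pose proof (binom_sym t (p - t)) as Hs. replace (t + (p - t))%nat with p in Hs by lia.
    now rewrite Hs.
  - rewrite binom_gt by lia. simpl. ring.
Qed.

(** * Exponential bounds *)

Lemma is_series_exp z : is_series (fun n => z ^ n / INR (fact n)) (exp z).
Proof.
  assert (H : exp_in z (exp z)) by exact (proj2_sig (exist_exp z)).
  apply is_series_Reals in H.
  eapply is_series_ext; [|exact H]. intro n. simpl. unfold Rdiv. ring.
Qed.

Lemma ex_series_exp z : ex_series (fun n => z ^ n / INR (fact n)).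
Proof. eexists. apply is_series_exp. Qed.

Lemma exp_le_compat x y : x <= y -> exp x <= exp y.
Proof. intros [Hlt|Heq]; [left; now apply exp_increasing | rewrite Heq; apply Rle_refl]. Qed.

Lemma pow_div_fact_le_exp x n : 0 <= x -> x ^ n / INR (fact n) <= exp x.
Proof.
  intros Hx. eapply Rle_trans; [|apply (exp_ge_taylor x n Hx)].
  assert (Hterm : forall k, 0 <= x ^ k / INR (fact k)).
  { intro k. apply Rdiv_le_0_compat; [apply pow_le; lra | apply INR_fact_pos]. }
  destruct n as [|n]; [apply Rle_refl|].
  rewrite tech5. pose proof (cond_pos_sum _ n Hterm). lra.
Qed.

Lemma pow_mul_exp_le c x n : 0 < c -> 0 <= x -> x ^ n * exp (- (c * x)) <= INR (fact n) / c ^ n.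
Proof.
  intros Hc Hx.
  pose proof (pow_div_fact_le_exp (c * x) n ltac:(apply Rmult_le_pos; lra)) as Htaylor.
  pose proof (INR_fact_pos n); pose proof (pow_lt c n Hc); pose proof (exp_pos (c * x)).
  rewrite Rpow_mult_distr in Htaylor. rewrite exp_Ropp.
  apply (Rmult_le_compat_r (INR (fact n) / (c ^ n * exp (c * x)))) in Htaylor;
    [|apply Rdiv_le_0_compat; nra].
  replace (c ^ n * x ^ n / INR (fact n) * (INR (fact n) / (c ^ n * exp (c * x))))
    with (x ^ n * / exp (c * x)) in Htaylor by (field; lra).
  replace (exp (c * x) * (INR (fact n) / (c ^ n * exp (c * x)))) with (INR (fact n) / c ^ n)
    in Htaylor by (field; lra).
  exact Htaylor.
Qed.

Lemma is_lim_pow_mul_exp a n : 0 < a -> is_lim (fun x => x ^ n * exp (- (a * x))) p_infty 0.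
Proof.
  intros Ha. set (K := INR (fact (S n)) / a ^ S n).
  apply (is_lim_le_le_loc (fun _ => 0) (fun x => K * / x)).
  - exists 0. intros x Hx.
    pose proof (pow_mul_exp_le a x (S n) Ha ltac:(lra)) as Hb. fold K in Hb.
    pose proof (exp_pos (- (a * x))). pose proof (pow_lt x n ltac:(lra)).
    split; [nra|]. apply (Rmult_le_reg_r x); [lra|].
    rewrite (Rmult_assoc K), Rinv_l by lra. simpl in Hb. lra.
  - apply is_lim_const.
  - replace (Finite 0) with (Rbar_mult K (Rbar_inv p_infty)) by (simpl; f_equal; ring).
    apply is_lim_scal_l, is_lim_inv; [apply is_lim_id | discriminate].
Qed.

Lemma CV_radius_infinite_of_exp_bound (c : nat -> R) (K : R) :
  (forall n, Rabs (c n) <= K ^ n / INR (fact n)) -> CV_radius c = p_infty.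
Proof.
  intros Hc.
  assert (Hdisk : forall r, CV_disk c r).
  { intro r. apply (ex_series_le (fun n => Rabs (c n * r ^ n)) (fun n => (K * Rabs r) ^ n / INR (fact n))).
    - intro n. change (norm (Rabs (c n * r ^ n))) with (Rabs (Rabs (c n * r ^ n))).
      rewrite Rabs_Rabsolu, Rabs_mult, <- RPow_abs, Rpow_mult_distr.
      replace (K ^ n * Rabs r ^ n / INR (fact n)) with (K ^ n / INR (fact n) * Rabs r ^ n) by lra.
      apply Rmult_le_compat_r; [apply pow_le, Rabs_pos | apply Hc].
    - apply ex_series_exp. }
  pose proof (CV_radius_ge_0 c) as Hge.
  destruct (CV_radius c) as [r| |] eqn:Hr; simpl in Hge; try easy.
  exfalso. apply (CV_disk_outside c (r + 1)).
  - rewrite Hr. simpl. rewrite Rabs_pos_eq; lra.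
  - apply is_lim_seq_abs_0, ex_series_lim_0, Hdisk.
Qed.

(** * Improper integrals on [0, +oo) *)

Local Notation is_RInt_0_inf f l := (is_RInt_gen f (at_point 0) (Rbar_locally p_infty) l).

Lemma is_RInt_0_inf_spec (f : R -> R) (l : R) :
  is_RInt_0_inf f l <->
  (forall b, 0 <= b -> ex_RInt f 0 b) /\
  (forall eps, 0 < eps -> exists M, forall b, M < b -> Rabs (RInt f 0 b - l) < eps).
Proof.
  split.
  - intros Hf.
    assert (Hnear : forall eps, 0 < eps -> exists M, forall b, M < b ->
                      ex_RInt f 0 b /\ Rabs (RInt f 0 b - l) < eps).
    { intros eps Heps.
      destruct (Hf (fun y => Rabs (y - l) < eps)) as [Q P HQ [M HP] Hint].
      { exists (mkposreal eps Heps). intros y Hy. apply Hy. }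
      exists M. intros b Hb. destruct (Hint 0 b HQ (HP b Hb)) as [y [Hy Hyl]].
      simpl in Hy. split; [now exists y|]. now rewrite (is_RInt_unique _ _ _ _ Hy). }
    split.
    + intros b Hb. destruct (Hnear 1 Rlt_0_1) as [M HM].
      set (c := Rmax (M + 1) b).
      apply (ex_RInt_Chasles_1 f 0 b c); [unfold c; split; [lra | apply Rmax_r]|].
      apply HM. unfold c. pose proof (Rmax_l (M + 1) b). lra.
    + intros eps Heps. destruct (Hnear eps Heps) as [M HM]. exists M. apply HM.
  - intros [Hex Hlim] P [eps HP]. destruct (Hlim eps (cond_pos eps)) as [M HM].
    exists (fun a => a = 0) (fun b => Rmax M 0 < b); [reflexivity | now exists (Rmax M 0)|].
    intros x y -> Hy. simpl.
    pose proof (Rmax_l M 0); pose proof (Rmax_r M 0).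
    exists (RInt f 0 y). split; [apply (RInt_correct f 0 y), Hex; lra|].
    apply HP, HM. lra.
Qed.

Lemma is_RInt_0_inf_ext (f g : R -> R) (l : R) :
  (forall x, 0 < x -> f x = g x) -> is_RInt_0_inf f l -> is_RInt_0_inf g l.
Proof.
  intros Hfg. apply is_RInt_gen_ext.
  exists (fun a => a = 0) (fun b => 0 < b); [reflexivity | now exists 0|].
  intros a b -> Hb x Hx. simpl in Hx. rewrite Rmin_left, Rmax_right in Hx by lra.
  apply Hfg. lra.
Qed.

Lemma is_RInt_0_inf_Derive (h h' : R -> R) :
  (forall x, is_derive h x (h' x)) -> (forall x, continuous h' x) ->
  is_lim h p_infty 0 -> is_RInt_0_inf h' (- h 0).
Proof.
  intros Hd Hc Hlim.
  assert (HD : forall x, Derive h x = h' x) by (intro; now apply is_derive_unique).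
  apply (is_RInt_0_inf_ext (Derive h)); [intros; apply HD|].
  replace (- h 0) with (0 - h 0) by ring.
  apply is_RInt_gen_Derive.
  - apply filter_forall. intros. eexists. apply Hd.
  - apply filter_forall. intros. apply (continuous_ext h'); [intro; now rewrite HD | apply Hc].
  - intros P HP. exact (locally_singleton _ _ HP).
  - exact Hlim.
Qed.

Lemma continuous_exp_lin a x : continuous (fun x => exp (- (a * x))) x.
Proof. apply (ex_derive_continuous (fun x => exp (- (a * x)))). auto_derive. auto. Qed.

Lemma continuous_pow n x : continuous (fun x => x ^ n) x.
Proof. apply (ex_derive_continuous (fun x => x ^ n)). auto_derive. auto. Qed.

Lemma is_RInt_0_inf_exp a : 0 < a -> is_RInt_0_inf (fun x => exp (- (a * x))) (/ a).
Proof.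
  intros Ha. replace (/ a) with (- (- exp (- (a * 0)) / a))
    by (rewrite Rmult_0_r, Ropp_0, exp_0; field; lra).
  apply (is_RInt_0_inf_Derive (fun x => - exp (- (a * x)) / a)).
  - intro x. auto_derive; auto. field. lra.
  - apply continuous_exp_lin.
  - apply (is_lim_ext (fun x => (- / a) * (x ^ 0 * exp (- (a * x))))); [intro; simpl; field; lra|].
    replace (Finite 0) with (Rbar_mult (- / a) 0) by (simpl; f_equal; ring).
    now apply is_lim_scal_l, is_lim_pow_mul_exp.
Qed.

(* Integration by parts against [exp (- a x)] lowers the power by one. *)
Lemma is_RInt_0_inf_exp_pow a p : 0 < a ->
  is_RInt_0_inf (fun x => exp (- (a * x)) * x ^ p) (INR (fact p) / a ^ S p).
Proof.
  intros Ha. induction p as [|p IHp].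
  - apply (is_RInt_0_inf_ext (fun x => exp (- (a * x)))); [intros; simpl; ring|].
    replace (INR (fact 0) / a ^ 1) with (/ a) by (simpl; field; lra).
    now apply is_RInt_0_inf_exp.
  - set (h := fun x => - exp (- (a * x)) * x ^ S p / a).
    set (h' := fun x => exp (- (a * x)) * x ^ S p - INR (S p) / a * (exp (- (a * x)) * x ^ p)).
    assert (Hh : is_RInt_0_inf h' (- h 0)).
    { apply is_RInt_0_inf_Derive.
      - intro x. unfold h, h'. auto_derive; auto.
        change (match p with 0%nat => 1 | S _ => INR p + 1 end) with (INR (S p)).
        change (x ^ S p) with (x * x ^ p). field. lra.
      - intro x. apply (ex_derive_continuous h'). unfold h'. auto_derive. auto.
      - apply (is_lim_ext (fun x => (- / a) * (x ^ S p * exp (- (a * x))))); [intro; unfold h; field; lra|].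
        replace (Finite 0) with (Rbar_mult (- / a) 0) by (simpl; f_equal; ring).
        now apply is_lim_scal_l, is_lim_pow_mul_exp. }
    assert (Hval : INR (fact (S p)) / a ^ S (S p) = - h 0 + INR (S p) / a * (INR (fact p) / a ^ S p)).
    { unfold h. rewrite pow_i, fact_simpl, mult_INR by lia.
      assert (a ^ p <> 0) by (apply pow_nonzero; lra). simpl (a ^ S _). field. lra. }
    rewrite Hval.
    refine (is_RInt_0_inf_ext _ _ _ _ (is_RInt_gen_plus _ _ _ _ Hh (is_RInt_gen_scal _ (INR (S p) / a) _ IHp))).
    intros x _. unfold h', plus, scal; simpl; unfold mult; simpl. ring.
Qed.

Lemma RInt_abs_le_exp (g : R -> R) (K d b : R) : 0 < d -> 0 <= b ->
  (forall x, 0 <= x <= b -> Rabs (g x) <= K * exp (- (d * x))) ->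
  ex_RInt g 0 b -> Rabs (RInt g 0 b) <= K / d.
Proof.
  intros Hd Hb Hg Hi.
  assert (HK : 0 <= K).
  { pose proof (Hg 0 (conj (Rle_refl 0) Hb)) as H0. rewrite Rmult_0_r, Ropp_0, exp_0 in H0.
    pose proof (Rabs_pos (g 0)). lra. }
  set (E := fun x => - K * exp (- (d * x)) / d).
  assert (HE : is_RInt (fun x => K * exp (- (d * x))) 0 b (minus (E b) (E 0))).
  { apply (is_RInt_derive E).
    - intros x _. unfold E. auto_derive; auto. field. lra.
    - intros x _. apply (ex_derive_continuous (fun x => K * exp (- (d * x)))). auto_derive. auto. }
  eapply Rle_trans; [apply abs_RInt_le; auto|].
  eapply Rle_trans; [apply (RInt_le _ (fun x => K * exp (- (d * x))))|].
  - exact Hb.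
  - now apply ex_RInt_norm.
  - eexists. exact HE.
  - intros x Hx. apply Hg. lra.
  - rewrite (is_RInt_unique _ _ _ _ HE). unfold E, minus, plus, opp; simpl.
    rewrite Rmult_0_r, Ropp_0, exp_0. pose proof (exp_pos (- (d * b))).
    apply (Rmult_le_reg_r d); [lra|]. field_simplify; nra.
Qed.

Lemma is_series_abs_le (a b : nat -> R) (la lb : R) :
  is_series a la -> is_series b lb -> (forall n, Rabs (a n) <= b n) -> Rabs la <= lb.
Proof.
  intros Ha Hb Hab.
  apply (is_lim_seq_le (fun N => Rabs (sum_n a N)) (sum_n b) (Rabs la) lb).
  - intro N. induction N as [|N IHN]; [rewrite !sum_O; apply Hab|].
    rewrite !sum_Sn. eapply Rle_trans; [apply Rabs_triang|]. apply Rplus_le_compat; auto.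
  - apply (is_lim_seq_abs _ la), Ha.
  - exact Hb.
Qed.

Lemma is_series_tail_abs_le (a b : nat -> R) (la lb : R) N :
  is_series a la -> is_series b lb -> (forall n, Rabs (a n) <= b n) ->
  Rabs (la - sum_n a N) <= lb - sum_n b N.
Proof.
  intros Ha Hb Hab.
  assert (Htail : forall (c : nat -> R) (l : R), is_series c l ->
                    is_series (fun k => c (S N + k)%nat) (l - sum_n c N)).
  { intros c l Hc. apply is_series_incr_n; [lia|]. simpl pred.
    change (@sum_n (NormedModule.AbelianMonoid R_AbsRing R_NormedModule) c N)
      with (@sum_n R_AbelianMonoid c N).
    unfold plus; simpl. replace (l - sum_n c N + sum_n c N) with l by ring. exact Hc. }
  apply (is_series_abs_le _ _ _ _ (Htail a la Ha) (Htail b lb Hb)). auto.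
Qed.

Lemma is_series_partial_sum_close (a : nat -> R) (l eps : R) :
  is_series a l -> 0 < eps -> exists N, Rabs (l - sum_n a N) < eps.
Proof.
  intros Ha Heps. destruct (Ha _ (locally_ball l (mkposreal eps Heps))) as [N HN].
  exists N. specialize (HN N (le_n N)). rewrite Rabs_minus_sym. exact HN.
Qed.

Lemma is_RInt_0_inf_sum_n (f : nat -> R -> R) (I : nat -> R) N :
  (forall n, is_RInt_0_inf (f n) (I n)) ->
  is_RInt_0_inf (fun x => sum_n (fun n => f n x) N) (sum_n I N).
Proof.
  intros Hf. induction N as [|N IHN].
  - rewrite sum_O. refine (is_RInt_0_inf_ext _ _ _ _ (Hf 0%nat)). intros. now rewrite sum_O.
  - rewrite sum_Sn. refine (is_RInt_0_inf_ext _ _ _ _ (is_RInt_gen_plus _ _ _ _ IHN (Hf (S N)))).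
    intros. now rewrite sum_Sn.
Qed.

Lemma is_RInt_0_inf_approx (F : R -> R) (l : R) :
  (forall b, 0 <= b -> ex_RInt F 0 b) ->
  (forall eps, 0 < eps -> exists (g : R -> R) (lg : R), is_RInt_0_inf g lg /\ Rabs (l - lg) <= eps /\
     forall b, 0 <= b -> Rabs (RInt F 0 b - RInt g 0 b) <= eps) ->
  is_RInt_0_inf F l.
Proof.
  intros HF Happrox. apply is_RInt_0_inf_spec. split; [exact HF|].
  intros eps Heps. destruct (Happrox (eps / 3)) as (g & lg & Hg & Hl & Hb); [lra|].
  destruct (proj2 (proj1 (is_RInt_0_inf_spec g lg) Hg) (eps / 3)) as [M HM]; [lra|].
  exists (Rmax M 0). intros b Hbig. pose proof (Rmax_l M 0); pose proof (Rmax_r M 0).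
  specialize (HM b ltac:(lra)). specialize (Hb b ltac:(lra)).
  replace (RInt F 0 b - l) with ((RInt F 0 b - RInt g 0 b) + (RInt g 0 b - lg) + (lg - l)) by ring.
  pose proof (Rabs_triang (RInt F 0 b - RInt g 0 b + (RInt g 0 b - lg)) (lg - l)).
  pose proof (Rabs_triang (RInt F 0 b - RInt g 0 b) (RInt g 0 b - lg)).
  rewrite Rabs_minus_sym in Hl. lra.
Qed.

Lemma is_RInt_0_inf_abs_le_exp (g : R -> R) (K d l : R) : 0 < d ->
  (forall x, 0 <= x -> Rabs (g x) <= K * exp (- (d * x))) ->
  is_RInt_0_inf g l -> Rabs l <= K / d.
Proof.
  intros Hd Hg Hl. refine (RInt_gen_norm g (fun x => K * exp (- (d * x))) _ _ _ _ Hl _).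
  - exists (fun a => a = 0) (fun b => 0 < b); [reflexivity | now exists 0|].
    intros a b -> Hb. simpl. lra.
  - exists (fun a => a = 0) (fun b => 0 < b); [reflexivity | now exists 0|].
    intros a b -> Hb x Hx. apply Hg. simpl in Hx. lra.
  - change (K / d) with (scal K (/ d)).
    apply (is_RInt_gen_scal (fun x => exp (- (d * x))) K), is_RInt_0_inf_exp, Hd.
Qed.

Lemma is_RInt_0_inf_series (f : nat -> R -> R) (F : R -> R) (C I : nat -> R) (d : R) :
  0 < d ->
  (forall n x, 0 <= x -> Rabs (f n x) <= C n * exp (- (d * x))) ->
  ex_series C ->
  (forall n, is_RInt_0_inf (f n) (I n)) ->
  (forall x, 0 <= x -> is_series (fun n => f n x) (F x)) ->
  (forall b, 0 <= b -> ex_RInt F 0 b) ->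
  is_RInt_0_inf F (Series I).
Proof.
  intros Hd Hf [SC HSC] HI HF HFint.
  assert (HCd : is_series (fun n => C n / d) (SC / d)) by now apply is_series_scal_r.
  assert (HIC : forall n, Rabs (I n) <= C n / d)
    by (intro n; apply (is_RInt_0_inf_abs_le_exp (f n)); auto).
  assert (HSI : is_series I (Series I)).
  { apply Series_correct, (ex_series_le I (fun n => C n / d)); [exact HIC | eexists; exact HCd]. }
  apply is_RInt_0_inf_approx; [exact HFint|]. intros eps Heps.
  destruct (is_series_partial_sum_close C SC (eps * d) HSC) as [N HN]; [nra|].
  set (T := SC - sum_n C N).
  assert (HT : T / d <= eps).
  { assert (HTabs : Rabs T < eps * d) by exact HN.
    apply (Rmult_le_reg_r d); [exact Hd|]. replace (T / d * d) with T by (field; lra).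
    pose proof (Rle_abs T). lra. }
  set (g := fun x => sum_n (fun n => f n x) N).
  assert (Hg : is_RInt_0_inf g (sum_n I N)) by now apply is_RInt_0_inf_sum_n.
  exists g, (sum_n I N). split; [exact Hg|]. split.
  - eapply Rle_trans; [apply (is_series_tail_abs_le I _ _ _ N HSI HCd HIC)|].
    rewrite (sum_n_ext _ (fun n => mult (C n) (/ d))) by reflexivity.
    rewrite sum_n_mult_r. change (SC / d - sum_n C N * / d <= eps). unfold T, Rdiv in HT. lra.
  - intros b Hb.
    assert (Hpt : forall x, 0 <= x <= b -> Rabs (F x - g x) <= T * exp (- (d * x))).
    { intros x Hx.
      assert (Hs : sum_n (fun n => C n * exp (- (d * x))) N = sum_n C N * exp (- (d * x)))
        by exact (sum_n_mult_r _ C N).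
      unfold T. rewrite Rmult_minus_distr_r, <- Hs.
      apply (is_series_tail_abs_le (fun n => f n x) (fun n => C n * exp (- (d * x)))).
      - apply HF. lra.
      - now apply is_series_scal_r.
      - intro n. apply Hf. lra. }
    assert (Hgint : ex_RInt g 0 b) by exact (proj1 (proj1 (is_RInt_0_inf_spec _ _) Hg) b Hb).
    replace (RInt F 0 b - RInt g 0 b) with (RInt (fun x => F x - g x) 0 b)
      by exact (RInt_minus F g 0 b (HFint b Hb) Hgint).
    eapply Rle_trans; [|exact HT].
    apply RInt_abs_le_exp; [exact Hd | exact Hb | exact Hpt |].
    exact (ex_RInt_minus F g 0 b (HFint b Hb) Hgint).
Qed.

Lemma CV_radius_infinite_of_inv_fact_sq (c : nat -> R) :
  (forall j, Rabs (c j) <= / (INR (fact j) * INR (fact j))) -> CV_radius c = p_infty.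
Proof.
  intros Hc. apply (CV_radius_infinite_of_exp_bound c 1). intro j.
  pose proof (INR_fact_pos j). assert (1 <= INR (fact j)) by (apply (le_INR 1), lt_O_fact).
  assert (/ (INR (fact j) * INR (fact j)) <= / INR (fact j)) by (apply Rinv_le_contravar; nra).
  specialize (Hc j). rewrite pow1. unfold Rdiv. lra.
Qed.

Lemma is_series_PSeries (c : nat -> R) z : CV_radius c = p_infty ->
  is_series (fun n => c n * z ^ n) (PSeries c z).
Proof.
  intros H. apply is_pseries_R, PSeries_correct, CV_radius_inside. rewrite H. exact I.
Qed.

Lemma continuous_PSeries (c : nat -> R) z : CV_radius c = p_infty -> continuous (PSeries c) z.
Proof.
  intros H. apply continuity_pt_filterlim, PSeries_continuity. rewrite H. exact I.
Qed.

(* [|z|^n / n!^2 = ((eps |z|)^n / n!) ((1/eps)^n / n!) <= exp (eps |z|) (1/eps)^n / n!] *)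
Lemma PSeries_abs_le_exp (c : nat -> R) (eps z : R) :
  (forall j, Rabs (c j) <= / (INR (fact j) * INR (fact j))) -> 0 < eps ->
  Rabs (PSeries c z) <= exp (eps * Rabs z) * exp (/ eps).
Proof.
  intros Hc Heps.
  assert (Hrad := CV_radius_infinite_of_inv_fact_sq c Hc).
  assert (Habs : ex_series (fun n => Rabs (c n * z ^ n))).
  { apply CV_disk_inside. rewrite Hrad. exact I. }
  eapply Rle_trans; [apply Series_Rabs, Habs|].
  assert (Hb : is_series (fun n => exp (eps * Rabs z) * ((/ eps) ^ n / INR (fact n)))
                         (exp (eps * Rabs z) * exp (/ eps)))
    by exact (is_series_scal_l _ _ _ (is_series_exp (/ eps))).
  rewrite <- (is_series_unique _ _ Hb). apply Series_le; [|eexists; exact Hb].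
  intro n. split; [apply Rabs_pos|].
  pose proof (INR_fact_pos n). pose proof (pow_le (Rabs z) n (Rabs_pos z)).
  pose proof (pow_div_fact_le_exp (eps * Rabs z) n ltac:(pose proof (Rabs_pos z); nra)).
  rewrite Rabs_mult, <- RPow_abs. eapply Rle_trans.
  { apply Rmult_le_compat_r; [assumption | apply Hc]. }
  replace (/ (INR (fact n) * INR (fact n)) * Rabs z ^ n)
    with ((eps * Rabs z) ^ n / INR (fact n) * ((/ eps) ^ n / INR (fact n)))
    by (rewrite Rpow_mult_distr, pow_inv; field; split; [lra | apply pow_nonzero; lra]).
  apply Rmult_le_compat_r; [|assumption].
  apply Rdiv_le_0_compat; [apply pow_le; left; now apply Rinv_0_lt_compat | assumption].
Qed.

Lemma exp_pow_mul_exp_le a n x : 0 < a -> 0 <= x ->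
  exp (- (a * x)) * x ^ n * exp (a / 4 * x) <= INR (fact n) * (4 / a) ^ n * exp (- (a / 2 * x)).
Proof.
  intros Ha Hx.
  assert (E : exp (- (a * x)) * exp (a / 4 * x) = exp (- (a / 4 * x)) * exp (- (a / 2 * x)))
    by (rewrite <- !exp_plus; f_equal; field).
  replace (exp (- (a * x)) * x ^ n * exp (a / 4 * x))
    with (x ^ n * exp (- (a / 4 * x)) * exp (- (a / 2 * x)))
    by (rewrite Rmult_assoc, <- E; ring).
  apply Rmult_le_compat_r; [left; apply exp_pos|].
  eapply Rle_trans; [apply pow_mul_exp_le; lra|].
  right. unfold Rdiv. rewrite !Rpow_mult_distr, !pow_inv.
  assert (a ^ n <> 0) by (apply pow_nonzero; lra). assert (4 ^ n <> 0) by (apply pow_nonzero; lra).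
  field. auto.
Qed.

Lemma coef_exp_pow_le (a w cj : R) (p j : nat) : 0 < a ->
  Rabs cj <= / (INR (fact j) * INR (fact j)) ->
  Rabs cj * Rabs w ^ j * (INR (fact (p + j)) * (4 / a) ^ (p + j))
  <= INR (fact p) * (8 / a) ^ p * ((8 * Rabs w / a) ^ j / INR (fact j)).
Proof.
  intros Ha Hc.
  pose proof (INR_fact_pos p); pose proof (INR_fact_pos j).
  pose proof (pow_le (Rabs w) j (Rabs_pos w)).
  assert (H4 : 0 <= (4 / a) ^ (p + j)) by (apply pow_le, Rlt_le, Rdiv_lt_0_compat; lra).
  eapply Rle_trans.
  { apply Rmult_le_compat_r; [apply Rmult_le_pos; [pose proof (INR_fact_pos (p + j)); lra | exact H4]|].
    apply Rmult_le_compat_r; [assumption | exact Hc]. }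
  eapply Rle_trans.
  { apply Rmult_le_compat_l; [apply Rmult_le_pos; [left; apply Rinv_0_lt_compat; nra | assumption]|].
    apply Rmult_le_compat_r; [exact H4 | apply fact_add_le]. }
  right. replace (8 / a) with (2 * (4 / a)) by (field; lra).
  replace (8 * Rabs w / a) with (2 * (4 / a) * Rabs w) by (field; lra).
  rewrite !Rpow_mult_distr, !pow_add. field. lra.
Qed.

Lemma exp_pow_PSeries_term_le (a w B cj gx x : R) (p j : nat) : 0 < a -> 0 <= x ->
  Rabs cj <= / (INR (fact j) * INR (fact j)) -> Rabs gx <= B * exp (a / 4 * x) ->
  Rabs (cj * w ^ j * (exp (- (a * x)) * x ^ (p + j) * gx))
  <= B * (INR (fact p) * (8 / a) ^ p * ((8 * Rabs w / a) ^ j / INR (fact j))) * exp (- (a / 2 * x)).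
Proof.
  intros Ha Hx Hc HgB.
  assert (HB : 0 <= B) by (pose proof (Rabs_pos gx); pose proof (exp_pos (a / 4 * x)); nra).
  pose proof (exp_pos (- (a * x))). pose proof (pow_le x (p + j) Hx).
  pose proof (exp_pow_mul_exp_le a (p + j) x Ha Hx).
  pose proof (coef_exp_pow_le a w cj p j Ha Hc).
  pose proof (Rabs_pos cj). pose proof (pow_le (Rabs w) j (Rabs_pos w)).
  pose proof (exp_pos (- (a / 2 * x))). pose proof (INR_fact_pos (p + j)).
  assert (0 <= (4 / a) ^ (p + j)) by (apply pow_le, Rlt_le, Rdiv_lt_0_compat; lra).
  rewrite !Rabs_mult, <- RPow_abs, (Rabs_pos_eq (exp _)), (Rabs_pos_eq (x ^ _)) by lra.
  set (cw := Rabs cj * Rabs w ^ j) in *.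
  assert (Hcw : 0 <= cw) by (unfold cw; nra).
  apply Rle_trans with (B * cw * (exp (- (a * x)) * x ^ (p + j) * exp (a / 4 * x))).
  { replace (B * cw * (exp (- (a * x)) * x ^ (p + j) * exp (a / 4 * x)))
      with (cw * (exp (- (a * x)) * x ^ (p + j) * (B * exp (a / 4 * x)))) by ring.
    apply Rmult_le_compat_l; [exact Hcw|]. apply Rmult_le_compat_l; [nra | exact HgB]. }
  eapply Rle_trans; [apply Rmult_le_compat_l; [nra | eassumption]|].
  replace (B * cw * (INR (fact (p + j)) * (4 / a) ^ (p + j) * exp (- (a / 2 * x))))
    with (B * (cw * (INR (fact (p + j)) * (4 / a) ^ (p + j))) * exp (- (a / 2 * x))) by ring.
  apply Rmult_le_compat_r; [lra|]. apply Rmult_le_compat_l; [lra | assumption].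
Qed.

Lemma is_RInt_0_inf_exp_pow_PSeries (a w B : R) (p : nat) (c : nat -> R) (g : R -> R) (I : nat -> R) :
  0 < a ->
  (forall j, Rabs (c j) <= / (INR (fact j) * INR (fact j))) ->
  (forall x, continuous g x) ->
  (forall x, 0 <= x -> Rabs (g x) <= B * exp (a / 4 * x)) ->
  (forall j, is_RInt_0_inf (fun x => exp (- (a * x)) * x ^ (p + j) * g x) (I j)) ->
  is_RInt_0_inf (fun x => exp (- (a * x)) * x ^ p * g x * PSeries c (w * x))
                (Series (fun j => c j * w ^ j * I j)).
Proof.
  intros Ha Hc Hg HgB HI.
  assert (Hrad := CV_radius_infinite_of_inv_fact_sq c Hc).
  apply (is_RInt_0_inf_series (fun j x => c j * w ^ j * (exp (- (a * x)) * x ^ (p + j) * g x)) _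
           (fun j => B * (INR (fact p) * (8 / a) ^ p * ((8 * Rabs w / a) ^ j / INR (fact j)))) _ (a / 2)).
  - lra.
  - intros j x Hx. apply exp_pow_PSeries_term_le; auto.
  - exact (ex_series_scal_l B _ (ex_series_scal_l _ _ (ex_series_exp _))).
  - intro j. exact (is_RInt_gen_scal _ (c j * w ^ j) _ (HI j)).
  - intros x _. eapply is_series_ext;
      [|exact (is_series_scal_l (exp (- (a * x)) * x ^ p * g x) _ _ (is_series_PSeries c (w * x) Hrad))].
    intro j. unfold scal; simpl; unfold mult; simpl. rewrite Rpow_mult_distr, pow_add. ring.
  - intros b _. apply (@ex_RInt_continuous R_CompleteNormedModule). intros x _.
    apply (continuous_mult (fun x => exp (- (a * x)) * x ^ p * g x)).
    + apply (continuous_mult (fun x => exp (- (a * x)) * x ^ p)); [|apply Hg].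
      apply (continuous_mult (fun x => exp (- (a * x)))); [apply continuous_exp_lin | apply continuous_pow].
    + apply (continuous_comp (fun x => w * x) (PSeries c)).
      * apply (ex_derive_continuous (fun x => w * x)). auto_derive. auto.
      * now apply continuous_PSeries.
Qed.

(** * Bessel series *)

Definition bessel_coef (z : R) (k j : nat) : R := z ^ j / (INR (fact j) * INR (fact (j + k))).

Lemma Rabs_bessel_coef_le z k j :
  Rabs (bessel_coef z k j) <= Rabs z ^ j / (INR (fact j) * INR (fact j)).
Proof.
  pose proof (INR_fact_pos j); pose proof (INR_fact_pos (j + k)).
  assert (INR (fact j) <= INR (fact (j + k))) by (apply le_INR, fact_le; lia).
  unfold bessel_coef, Rdiv. rewrite Rabs_mult, <- RPow_abs, Rabs_inv, (Rabs_pos_eq (_ * _)) by nra.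
  apply Rmult_le_compat_l; [apply pow_le, Rabs_pos|]. apply Rinv_le_contravar; nra.
Qed.

Lemma Rabs_bessel_coef_m1_le k j : Rabs (bessel_coef (-1) k j) <= / (INR (fact j) * INR (fact j)).
Proof.
  eapply Rle_trans; [apply Rabs_bessel_coef_le|].
  rewrite Rabs_m1, pow1. unfold Rdiv. lra.
Qed.

Lemma CV_radius_bessel_coef z k : CV_radius (bessel_coef z k) = p_infty.
Proof.
  apply (CV_radius_infinite_of_exp_bound _ (Rabs z)). intro j.
  eapply Rle_trans; [apply Rabs_bessel_coef_le|].
  pose proof (INR_fact_pos j). assert (1 <= INR (fact j)) by (apply (le_INR 1), lt_O_fact).
  unfold Rdiv. apply Rmult_le_compat_l; [apply pow_le, Rabs_pos|]. apply Rinv_le_contravar; nra.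
Qed.

Lemma BesselJ_PSeries k y : BesselJ k y = (y / 2) ^ k * PSeries (bessel_coef (-1) k) ((y / 2) ^ 2).
Proof.
  unfold BesselJ, PSeries. rewrite <- Series_scal_l. apply Series_ext. intro j.
  unfold bessel_coef. rewrite pow_add, pow_mult. unfold Rdiv. ring.
Qed.

Lemma BesselI_PSeries k y : BesselI k y = (y / 2) ^ k * PSeries (bessel_coef 1 k) ((y / 2) ^ 2).
Proof.
  unfold BesselI, PSeries. rewrite <- Series_scal_l. apply Series_ext. intro j.
  unfold bessel_coef. rewrite pow_add, pow_mult, pow1. unfold Rdiv. ring.
Qed.

Lemma BesselJ_sqrt (k : nat) (b x : R) : 0 <= x ->
  BesselJ k (b * sqrt x) = (b / 2) ^ k * sqrt x ^ k * PSeries (bessel_coef (-1) k) (b ^ 2 / 4 * x).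
Proof.
  intros Hx. rewrite BesselJ_PSeries.
  replace ((b * sqrt x / 2) ^ 2) with (b ^ 2 / 4 * x)
    by (replace ((b * sqrt x / 2) ^ 2) with (b ^ 2 * sqrt x ^ 2 / 4) by field;
        rewrite pow2_sqrt by exact Hx; field).
  rewrite <- Rpow_mult_distr. f_equal. f_equal. field.
Qed.

Lemma PSeries_bessel_coef_scale y k x : PSeries (bessel_coef y k) x = PSeries (bessel_coef 1 k) (y * x).
Proof.
  apply Series_ext. intro n. unfold bessel_coef. rewrite pow1, Rpow_mult_distr. unfold Rdiv. ring.
Qed.

(* [besselP y q x = sum_(p >= q) y^(p-q) x^p / ((p-q)! p!) = (x/y)^(q/2) I_q (2 sqrt (x y))];
   up to a constant factor, [exp (- x) * besselP y m x] is the function differentiated in the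
   theorem. *)
Definition besselP_coef (y : R) (q p : nat) : R :=
  if (p <? q)%nat then 0 else y ^ (p - q) / (INR (fact (p - q)) * INR (fact p)).

Definition besselP (y : R) (q : nat) (x : R) : R := PSeries (besselP_coef y q) x.

Lemma besselP_coef_incr_n y q p : besselP_coef y q p = PS_incr_n (bessel_coef y q) q p.
Proof.
  rewrite PS_incr_n_simplify. unfold besselP_coef, bessel_coef.
  destruct (Nat.ltb_spec p q); destruct (Compare_dec.le_lt_dec q p); try lia; [reflexivity|].
  now replace (p - q + q)%nat with p by lia.
Qed.

Lemma besselP_PSeries y q x : besselP y q x = x ^ q * PSeries (bessel_coef y q) x.
Proof.
  unfold besselP. rewrite <- PSeries_incr_n. apply PSeries_ext, besselP_coef_incr_n.
Qed.

Lemma sqrt_pow_BesselI (a b x : R) (m : nat) : 0 < a -> 0 <= x ->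
  sqrt (x / a) ^ m * BesselI m (b * sqrt (x / a)) = (b / (2 * a)) ^ m * besselP (b ^ 2 / (4 * a)) m x.
Proof.
  intros Ha Hx. assert (Hq : sqrt (x / a) ^ 2 = x / a) by (apply pow2_sqrt, Rdiv_le_0_compat; lra).
  rewrite BesselI_PSeries, besselP_PSeries, (PSeries_bessel_coef_scale (b ^ 2 / (4 * a))).
  replace ((b * sqrt (x / a) / 2) ^ 2) with (b ^ 2 / (4 * a) * x)
    by (replace ((b * sqrt (x / a) / 2) ^ 2) with (b ^ 2 * sqrt (x / a) ^ 2 / 4) by field;
        rewrite Hq; field; lra).
  rewrite <- !Rmult_assoc. f_equal. rewrite <- !Rpow_mult_distr. f_equal.
  replace (sqrt (x / a) * (b * sqrt (x / a) / 2)) with (b / 2 * sqrt (x / a) ^ 2) by field.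
  rewrite Hq. field. lra.
Qed.

Lemma besselP_BesselI (a s t : R) (n : nat) : a <> 0 -> t <> 0 ->
  besselP (t ^ 2 / a) n (s ^ 2 / a) = (s / t) ^ n * BesselI n (2 * s * t / a).
Proof.
  intros Ha Ht. rewrite BesselI_PSeries, besselP_PSeries, (PSeries_bessel_coef_scale (t ^ 2 / a)).
  replace ((2 * s * t / a / 2) ^ 2) with (t ^ 2 / a * (s ^ 2 / a)) by (field; auto).
  rewrite <- Rmult_assoc, <- Rpow_mult_distr. f_equal. f_equal. field. auto.
Qed.

Lemma CV_radius_incr_n (a : nat -> R) n : CV_radius (PS_incr_n a n) = CV_radius a.
Proof. induction n as [|n IHn]; simpl; [reflexivity|]. now rewrite CV_radius_incr_1. Qed.

Lemma CV_radius_besselP_coef y q : CV_radius (besselP_coef y q) = p_infty.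
Proof.
  rewrite (CV_radius_ext _ _ (besselP_coef_incr_n y q)), CV_radius_incr_n.
  apply CV_radius_bessel_coef.
Qed.

Lemma is_derive_besselP y q x : is_derive (besselP y (S q)) x (besselP y q x).
Proof.
  unfold besselP.
  replace (PSeries (besselP_coef y q) x) with (PSeries (PS_derive (besselP_coef y (S q))) x).
  { apply is_derive_PSeries. rewrite CV_radius_besselP_coef. exact I. }
  apply PSeries_ext. intro n. unfold PS_derive, besselP_coef.
  change (S n <? S q)%nat with (n <? q)%nat. destruct (Nat.ltb_spec n q); [ring|].
  replace (S n - S q)%nat with (n - q)%nat by lia.
  rewrite fact_simpl, mult_INR, S_INR.
  pose proof (INR_fact_pos n); pose proof (INR_fact_pos (n - q)); pose proof (pos_INR n).
  field. lra.
Qed.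

Lemma is_derive_sum_f_R0 (g g' : nat -> R -> R) N x :
  (forall n, is_derive (g n) x (g' n x)) ->
  is_derive (fun x => sum_f_R0 (fun n => g n x) N) x (sum_f_R0 (fun n => g' n x) N).
Proof.
  intros H. induction N as [|N IHN]; simpl; [apply H|].
  apply (is_derive_plus (fun x => sum_f_R0 (fun n => g n x) N) (g (S N))); auto.
Qed.

Lemma is_derive_alt_sum (g g' : nat -> R -> R) l x :
  (forall n, is_derive (g n) x (g' n x)) ->
  is_derive (fun x => alt_sum l (fun n => g n x)) x (alt_sum l (fun n => g' n x)).
Proof.
  intros H. apply (is_derive_sum_f_R0 (fun n x => (-1) ^ n * INR (binom l n) * g n x)
                                      (fun n x => (-1) ^ n * INR (binom l n) * g' n x)).
  intro n. now apply is_derive_scal.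
Qed.

Lemma Derive_n_exp_besselP y l : forall d x,
  Derive_n (fun x => exp (- x) * besselP y (d + l) x) l x =
  exp (- x) * alt_sum l (fun n => besselP y (d + n) x).
Proof.
  induction l as [|l IHl]; intros d x.
  - unfold alt_sum. simpl. rewrite Nat.add_0_r. ring.
  - replace (d + S l)%nat with (S d + l)%nat by lia. simpl Derive_n.
    rewrite (Derive_ext _ _ _ (IHl (S d))). apply is_derive_unique.
    rewrite alt_sum_S.
    replace (exp (- x) * (alt_sum l (fun n => besselP y (d + n) x) - alt_sum l (fun n => besselP y (d + S n) x)))
      with (- exp (- x) * alt_sum l (fun n => besselP y (S d + n) x)
            + exp (- x) * alt_sum l (fun n => besselP y (d + n) x))
      by (rewrite (alt_sum_ext l (fun n => besselP y (d + S n) x) (fun n => besselP y (S d + n) x))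
            by (intro n; now replace (d + S n)%nat with (S d + n)%nat by lia); ring).
    apply (is_derive_mult (fun x => exp (- x))).
    + auto_derive; auto. ring.
    + apply (is_derive_alt_sum (fun n => besselP y (S d + n)) (fun n => besselP y (d + n))).
      intro n. apply is_derive_besselP.
    + intros; apply Rmult_comm.
Qed.

(** * A double-series identity *)

Lemma is_series_sum_f_R0 (F : nat -> nat -> R) (L : nat -> R) N :
  (forall n, (n <= N)%nat -> is_series (F n) (L n)) ->
  is_series (fun t => sum_f_R0 (fun n => F n t) N) (sum_f_R0 L N).
Proof.
  intros H. induction N as [|N IHN]; simpl; [apply H; lia|].
  apply (is_series_plus (fun t => sum_f_R0 (fun n => F n t) N) (F (S N))); auto.
Qed.

Lemma is_series_finite_support (e : nat -> R) N :
  (forall i, (N < i)%nat -> e i = 0) -> is_series e (sum_f_R0 e N).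
Proof.
  intros H. apply (is_lim_seq_ext_loc (fun _ => sum_f_R0 e N) (sum_n e) (sum_f_R0 e N));
    [|apply is_lim_seq_const].
  exists N. intros n Hn. rewrite sum_n_Reals. symmetry. now apply sum_f_R0_zero_tail.
Qed.

Lemma is_series_mult_exp (a : nat -> R) (la X : R) : 0 <= X ->
  is_series a la -> ex_series (fun n => Rabs (a n)) ->
  is_series (fun n => sum_f_R0 (fun k => a k * (X ^ (n - k) / INR (fact (n - k)))) n) (la * exp X).
Proof.
  intros HX Ha Habs.
  apply (is_series_mult a (fun n => X ^ n / INR (fact n))); [exact Ha | apply is_series_exp | exact Habs|].
  apply (ex_series_ext (fun n => X ^ n / INR (fact n))); [|apply ex_series_exp].
  intro n. symmetry. apply Rabs_pos_eq, Rdiv_le_0_compat; [now apply pow_le | apply INR_fact_pos].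
Qed.

Definition binom_series (Y : R) (m k : nat) : R :=
  Series (fun j => (-Y) ^ j / INR (fact j) * INR (binom (k + j + m) k)).

Lemma Rabs_exp_binom_term_le (Y : R) (j p B q : nat) : 0 <= Y -> (B <= p + j)%nat ->
  Rabs ((-Y) ^ j / INR (fact j) * INR (binom B q)) <= 2 ^ p * ((2 * Y) ^ j / INR (fact j)).
Proof.
  intros HY HB. pose proof (INR_fact_pos j). pose proof (pow_le Y j HY).
  rewrite Rabs_mult, Rabs_div, <- RPow_abs, Rabs_Ropp, !Rabs_pos_eq by (apply pos_INR || lra).
  assert (Hb : INR (binom B q) <= 2 ^ (p + j)).
  { rewrite <- (pow_INR 2). apply le_INR. eapply Nat.le_trans; [apply binom_le_pow2|].
    apply Nat.pow_le_mono_r; lia. }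
  rewrite pow_add in Hb. rewrite Rpow_mult_distr.
  apply (Rmult_le_compat_l (Y ^ j / INR (fact j))) in Hb; [|apply Rdiv_le_0_compat; lra].
  eapply Rle_trans; [exact Hb|]. right. field. lra.
Qed.

Lemma ex_series_abs_binom_series Y m k : 0 <= Y ->
  ex_series (fun j => Rabs ((-Y) ^ j / INR (fact j) * INR (binom (k + j + m) k))).
Proof.
  intros HY.
  apply (ex_series_le (fun j => Rabs ((-Y) ^ j / INR (fact j) * INR (binom (k + j + m) k)))
                      (fun j => 2 ^ (k + m) * ((2 * Y) ^ j / INR (fact j)))).
  - intro j. change (norm (Rabs ?z)) with (Rabs (Rabs z)). rewrite Rabs_Rabsolu.
    apply Rabs_exp_binom_term_le; [exact HY | lia].
  - exact (ex_series_scal_l _ _ (ex_series_exp (2 * Y))).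
Qed.

Lemma Rabs_binom_series_le Y m k : 0 <= Y -> Rabs (binom_series Y m k) <= 2 ^ (k + m) * exp (2 * Y).
Proof.
  intros HY. eapply Rle_trans; [apply Series_Rabs, ex_series_abs_binom_series, HY|].
  assert (Hb : is_series (fun j => 2 ^ (k + m) * ((2 * Y) ^ j / INR (fact j))) (2 ^ (k + m) * exp (2 * Y)))
    by exact (is_series_scal_l _ _ _ (is_series_exp (2 * Y))).
  rewrite <- (is_series_unique _ _ Hb). apply Series_le; [|eexists; exact Hb].
  intro j. split; [apply Rabs_pos|]. apply Rabs_exp_binom_term_le; [exact HY | lia].
Qed.

Lemma alt_sum_binom_series Y m t : 0 <= Y ->
  alt_sum t (binom_series Y m) =
  Series (fun j => (-Y) ^ j / INR (fact j) * ((-1) ^ t * INR (binom (j + m) t))).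
Proof.
  intros HY.
  set (F := fun k j => (-1) ^ k * INR (binom t k) * ((-Y) ^ j / INR (fact j) * INR (binom (k + j + m) k))).
  assert (H : is_series (fun j => sum_f_R0 (fun k => F k j) t) (alt_sum t (binom_series Y m))).
  { apply is_series_sum_f_R0. intros k _. unfold F, binom_series.
    exact (is_series_scal_l _ _ _ (Series_correct _ (ex_series_Rabs _ (ex_series_abs_binom_series Y m k HY)))). }
  rewrite <- (is_series_unique _ _ H). apply Series_ext. intro j.
  rewrite <- alt_sum_binom_diag. unfold alt_sum. rewrite <- sum_f_R0_mult_l.
  apply sum_eq. intros k _. unfold F.
  replace (k + j + m)%nat with (k + (j + m))%nat by lia. rewrite binom_sym. ring.
Qed.

Lemma besselP_coef_sum_rev Y m t :
  INR (fact t) * sum_f_R0 (fun n => (-1) ^ n * INR (binom m n) * besselP_coef Y n t) m =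
  sum_f_R0 (fun i => Y ^ i / INR (fact i) * ((-1) ^ t * ((-1) ^ i * INR (binom m (t - i))))) t.
Proof.
  set (g := fun n => if (n <=? t)%nat then (-1) ^ n * INR (binom m n) * (Y ^ (t - n) / INR (fact (t - n)))
                     else 0).
  transitivity (sum_f_R0 g (m + t)).
  - rewrite <- sum_f_R0_mult_l, (sum_f_R0_zero_tail g m (m + t)) by
      (try lia; intros n Hn; unfold g; rewrite binom_gt by lia; change (INR 0) with 0;
       destruct (n <=? t)%nat; ring).
    apply sum_eq. intros n _. unfold g, besselP_coef.
    destruct (Nat.leb_spec n t); destruct (Nat.ltb_spec t n); try lia; [|ring].
    pose proof (INR_fact_pos t); pose proof (INR_fact_pos (t - n)). field. lra.
  - rewrite (sum_f_R0_zero_tail g t (m + t)) by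
      (lia || (intros n Hn; unfold g; destruct (Nat.leb_spec n t); [lia | reflexivity])).
    rewrite <- (sum_f_R0_rev (fun i => Y ^ i / INR (fact i) * ((-1) ^ t * ((-1) ^ i * INR (binom m (t - i)))))).
    apply sum_eq. intros n Hn. unfold g. destruct (Nat.leb_spec n t); [|lia].
    replace (t - (t - n))%nat with n by lia.
    replace ((-1) ^ t) with ((-1) ^ n * (-1) ^ (t - n)) by (rewrite <- pow_add; f_equal; lia).
    replace ((-1) ^ n * (-1) ^ (t - n) * ((-1) ^ (t - n) * INR (binom m n)))
      with ((-1) ^ n * INR (binom m n) * ((-1) ^ (t - n) * (-1) ^ (t - n))) by ring.
    rewrite <- pow_add. replace (t - n + (t - n))%nat with (2 * (t - n))%nat by lia.
    rewrite pow_1_even. ring.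
Qed.

Lemma Series_alt_binom_mul_exp Y m t : 0 <= Y ->
  Series (fun j => (-Y) ^ j / INR (fact j) * ((-1) ^ t * INR (binom (j + m) t))) * exp Y =
  INR (fact t) * sum_f_R0 (fun n => (-1) ^ n * INR (binom m n) * besselP_coef Y n t) m.
Proof.
  intros HY. rewrite besselP_coef_sum_rev.
  set (a := fun j => (-Y) ^ j / INR (fact j) * ((-1) ^ t * INR (binom (j + m) t))).
  assert (Ha : ex_series (fun j => Rabs (a j))).
  { apply (ex_series_le (fun j => Rabs (a j)) (fun j => 2 ^ m * ((2 * Y) ^ j / INR (fact j)))).
    - intro j. change (norm (Rabs ?z)) with (Rabs (Rabs z)). rewrite Rabs_Rabsolu. unfold a.
      replace ((-Y) ^ j / INR (fact j) * ((-1) ^ t * INR (binom (j + m) t)))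
        with ((-1) ^ t * ((-Y) ^ j / INR (fact j) * INR (binom (j + m) t))) by ring.
      rewrite Rabs_mult, pow_1_abs, Rmult_1_l. apply Rabs_exp_binom_term_le; [exact HY | lia].
    - exact (ex_series_scal_l _ _ (ex_series_exp (2 * Y))). }
  pose proof (is_series_mult_exp a (Series a) Y HY (Series_correct _ (ex_series_Rabs _ Ha)) Ha) as HM.
  set (e := fun i => Y ^ i / INR (fact i) *
              ((-1) ^ t * (if (i <=? t)%nat then (-1) ^ i * INR (binom m (t - i)) else 0))).
  assert (He : forall i, sum_f_R0 (fun k => a k * (Y ^ (i - k) / INR (fact (i - k)))) i = e i).
  { intro i. unfold e. rewrite <- alt_sum_binom. unfold alt_sum. rewrite <- !sum_f_R0_mult_l.
    apply sum_eq. intros k Hk. unfold a. rewrite (INR_binom i k) by lia. unfold Binomial.C.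
    replace ((-Y) ^ k) with ((-1) ^ k * Y ^ k) by (rewrite <- Rpow_mult_distr; f_equal; ring).
    replace (Y ^ i) with (Y ^ k * Y ^ (i - k)) by (rewrite <- pow_add; f_equal; lia).
    pose proof (INR_fact_pos k); pose proof (INR_fact_pos i); pose proof (INR_fact_pos (i - k)).
    field. lra. }
  apply (is_series_ext _ e) in HM; [|exact He].
  rewrite <- (is_series_unique _ _ HM).
  rewrite (is_series_unique _ _ (is_series_finite_support e t
    (fun i Hi => ltac:(unfold e; destruct (Nat.leb_spec i t); [lia | ring])))).
  apply sum_eq. intros i Hi. unfold e. destruct (Nat.leb_spec i t); [reflexivity | lia].
Qed.

Lemma is_series_alt_sum_besselP Y m X :
  is_series (fun t => sum_f_R0 (fun n => (-1) ^ n * INR (binom m n) * (besselP_coef Y n t * X ^ t)) m)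
            (alt_sum m (fun n => besselP Y n X)).
Proof.
  apply (is_series_sum_f_R0 (fun n t => (-1) ^ n * INR (binom m n) * (besselP_coef Y n t * X ^ t))).
  intros n _.
  exact (is_series_scal_l _ _ _ (is_series_PSeries _ X (CV_radius_besselP_coef Y n))).
Qed.

Lemma Series_exp_binom_series X Y m : 0 <= X -> 0 <= Y ->
  Series (fun k => (-X) ^ k / INR (fact k) * binom_series Y m k) =
  exp (- X) * exp (- Y) * alt_sum m (fun n => besselP Y n X).
Proof.
  intros HX HY.
  set (a := fun k => (-X) ^ k / INR (fact k) * binom_series Y m k).
  assert (Ha : ex_series (fun k => Rabs (a k))).
  { apply (ex_series_le (fun k => Rabs (a k)) (fun k => 2 ^ m * exp (2 * Y) * ((2 * X) ^ k / INR (fact k)))).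
    - intro k. change (norm (Rabs ?z)) with (Rabs (Rabs z)). rewrite Rabs_Rabsolu. unfold a.
      pose proof (INR_fact_pos k). pose proof (pow_le X k HX).
      rewrite Rabs_mult, Rabs_div, <- RPow_abs, Rabs_Ropp, !(Rabs_pos_eq X), (Rabs_pos_eq (INR _)) by lra.
      eapply Rle_trans; [apply Rmult_le_compat_l; [apply Rdiv_le_0_compat; lra | apply Rabs_binom_series_le, HY]|].
      right. rewrite Rpow_mult_distr, pow_add. field. lra.
    - exact (ex_series_scal_l _ _ (ex_series_exp (2 * X))). }
  pose proof (is_series_mult_exp a (Series a) X HX (Series_correct _ (ex_series_Rabs _ Ha)) Ha) as HM.
  assert (Hcoef : forall t, sum_f_R0 (fun k => a k * (X ^ (t - k) / INR (fact (t - k)))) t * exp Y =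
    sum_f_R0 (fun n => (-1) ^ n * INR (binom m n) * (besselP_coef Y n t * X ^ t)) m).
  { intro t.
    replace (sum_f_R0 (fun k => a k * (X ^ (t - k) / INR (fact (t - k)))) t)
      with (X ^ t / INR (fact t) * alt_sum t (binom_series Y m)).
    - rewrite alt_sum_binom_series, Rmult_assoc, Series_alt_binom_mul_exp by exact HY.
      rewrite <- !sum_f_R0_mult_l. apply sum_eq. intros n _.
      pose proof (INR_fact_pos t). field. lra.
    - unfold alt_sum. rewrite <- sum_f_R0_mult_l. apply sum_eq. intros k Hk. unfold a.
      rewrite (INR_binom t k) by lia. unfold Binomial.C.
      replace ((-X) ^ k) with ((-1) ^ k * X ^ k) by (rewrite <- Rpow_mult_distr; f_equal; ring).
      replace (X ^ t) with (X ^ k * X ^ (t - k)) by (rewrite <- pow_add; f_equal; lia).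
      pose proof (INR_fact_pos k); pose proof (INR_fact_pos t); pose proof (INR_fact_pos (t - k)).
      field. lra. }
  apply (is_series_scal_r (exp Y)), (is_series_ext _ _ _ Hcoef) in HM.
  pose proof (is_series_unique _ _ HM) as Hval.
  rewrite (is_series_unique _ _ (is_series_alt_sum_besselP Y m X)) in Hval.
  rewrite Hval.
  replace (exp (- X) * exp (- Y) * (Series a * exp X * exp Y))
    with (Series a * (exp (- X) * exp X) * (exp (- Y) * exp Y)) by ring.
  rewrite <- !exp_plus, !Rplus_opp_l, exp_0. ring.
Qed.

(** * The integral *)

Lemma is_RInt_0_inf_exp_pow_bessel (a v : R) (m p : nat) : 0 < a ->
  is_RInt_0_inf (fun x => exp (- (a * x)) * x ^ p * PSeries (bessel_coef (-1) m) (v * x))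
    (Series (fun j => bessel_coef (-1) m j * v ^ j * (INR (fact (p + j)) / a ^ S (p + j)))).
Proof.
  intros Ha.
  apply (is_RInt_0_inf_ext (fun x => exp (- (a * x)) * x ^ p * 1 * PSeries (bessel_coef (-1) m) (v * x)));
    [intros; ring|].
  apply (is_RInt_0_inf_exp_pow_PSeries a v 1).
  - exact Ha.
  - apply Rabs_bessel_coef_m1_le.
  - intro. apply continuous_const.
  - intros x Hx. pose proof (exp_ineq1_le (a / 4 * x)).
    assert (0 <= a / 4 * x) by (apply Rmult_le_pos; lra). rewrite Rabs_R1. lra.
  - intro j. refine (is_RInt_0_inf_ext _ _ _ _ (is_RInt_0_inf_exp_pow a (p + j) Ha)). intros; ring.
Qed.

Lemma is_RInt_0_inf_exp_pow_bessel_mul_bessel (a u v : R) (m : nat) : 0 < a ->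
  is_RInt_0_inf
    (fun x => exp (- (a * x)) * x ^ m * PSeries (bessel_coef (-1) m) (v * x) * PSeries (bessel_coef (-1) 0) (u * x))
    (Series (fun k => bessel_coef (-1) 0 k * u ^ k *
       Series (fun j => bessel_coef (-1) m j * v ^ j * (INR (fact (m + k + j)) / a ^ S (m + k + j))))).
Proof.
  intros Ha. set (eps := a / (4 * (Rabs v + 1))).
  assert (Heps : 0 < eps) by (unfold eps; pose proof (Rabs_pos v); apply Rdiv_lt_0_compat; lra).
  apply (is_RInt_0_inf_exp_pow_PSeries a u (exp (/ eps))).
  - exact Ha.
  - apply Rabs_bessel_coef_m1_le.
  - intro x. apply (continuous_comp (fun x => v * x) (PSeries (bessel_coef (-1) m))).
    + apply (ex_derive_continuous (fun x => v * x)). auto_derive. auto.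
    + apply continuous_PSeries, CV_radius_bessel_coef.
  - intros x Hx. eapply Rle_trans; [apply PSeries_abs_le_exp; [apply Rabs_bessel_coef_m1_le | exact Heps]|].
    rewrite Rmult_comm. apply Rmult_le_compat_l; [left; apply exp_pos|].
    apply exp_le_compat. rewrite Rabs_mult, (Rabs_pos_eq x), <- Rmult_assoc by exact Hx.
    apply Rmult_le_compat_r; [exact Hx|].
    pose proof (Rabs_pos v).
    replace (eps * Rabs v) with (a / 4 * (Rabs v / (Rabs v + 1))) by (unfold eps; field; lra).
    rewrite <- (Rmult_1_r (a / 4)) at 2. apply Rmult_le_compat_l; [lra|].
    assert (Hpos : 0 < Rabs v + 1) by lra. apply (Rdiv_le_1 _ _ Hpos). lra.
  - intro k. exact (is_RInt_0_inf_exp_pow_bessel a v m (m + k) Ha).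
Qed.

Lemma Series_bessel_coef_binom_series (a u v : R) (m : nat) : 0 < a ->
  Series (fun k => bessel_coef (-1) 0 k * u ^ k *
     Series (fun j => bessel_coef (-1) m j * v ^ j * (INR (fact (m + k + j)) / a ^ S (m + k + j)))) =
  / a ^ S m * Series (fun k => (- (u / a)) ^ k / INR (fact k) * binom_series (v / a) m k).
Proof.
  intros Ha.
  assert (Hneg : forall z n, (- (z / a)) ^ n = (-1) ^ n * z ^ n / a ^ n).
  { intros z n. unfold Rdiv. rewrite <- pow_inv, <- !Rpow_mult_distr. f_equal. ring. }
  rewrite <- Series_scal_l. apply Series_ext. intro k.
  unfold binom_series. rewrite <- !Series_scal_l. apply Series_ext. intro j.
  unfold bessel_coef. rewrite (INR_binom (k + j + m) k) by lia. unfold Binomial.C.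
  replace (k + j + m - k)%nat with (j + m)%nat by lia.
  replace (m + k + j)%nat with (k + j + m)%nat by lia. rewrite Nat.add_0_r, !Hneg.
  replace (a ^ S (k + j + m)) with (a * a ^ m * a ^ k * a ^ j) by (simpl; rewrite !pow_add; ring).
  pose proof (INR_fact_pos k); pose proof (INR_fact_pos j).
  pose proof (INR_fact_pos (j + m)); pose proof (INR_fact_pos (k + j + m)).
  assert (a ^ k <> 0) by (apply pow_nonzero; lra).
  assert (a ^ j <> 0) by (apply pow_nonzero; lra).
  assert (a ^ m <> 0) by (apply pow_nonzero; lra).
  simpl (a ^ S m). field. repeat split; lra.
Qed.

Lemma is_RInt_0_inf_exp_pow_bessel_closed_form (a u v : R) (m : nat) : 0 < a -> 0 <= u -> 0 <= v ->
  is_RInt_0_inf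
    (fun x => exp (- (a * x)) * x ^ m * PSeries (bessel_coef (-1) m) (v * x) * PSeries (bessel_coef (-1) 0) (u * x))
    (/ a ^ S m * (exp (- (u / a)) * exp (- (v / a)) * alt_sum m (fun n => besselP (v / a) n (u / a)))).
Proof.
  intros Ha Hu Hv.
  rewrite <- Series_exp_binom_series by (apply Rdiv_le_0_compat; lra).
  rewrite <- Series_bessel_coef_binom_series by exact Ha.
  now apply is_RInt_0_inf_exp_pow_bessel_mul_bessel.
Qed.

Lemma Derive_n_exp_sqrt_BesselI (a b X : R) (m : nat) : 0 < a -> 0 < X ->
  Derive_n (fun x => exp (- x) * sqrt (x / a) ^ m * BesselI m (b * sqrt (x / a))) m X =
  (b / (2 * a)) ^ m * (exp (- X) * alt_sum m (fun n => besselP (b ^ 2 / (4 * a)) n X)).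
Proof.
  intros Ha HX.
  rewrite (Derive_n_ext_loc _ (fun x => (b / (2 * a)) ^ m * (exp (- x) * besselP (b ^ 2 / (4 * a)) m x))).
  - now rewrite Derive_n_scal_l, (Derive_n_exp_besselP _ m 0).
  - apply (locally_interval _ X 0 p_infty); [exact HX | exact I|].
    intros y Hy _. simpl in Hy. rewrite Rmult_assoc, sqrt_pow_BesselI by lra. ring.
Qed.

Lemma is_RInt_0_inf_exp_BesselJ_BesselJ (a b1 b2 : R) (m : nat) : 0 < a ->
  is_RInt_0_inf (fun x => exp (- a * x) * BesselJ 0 (b1 * sqrt x) * BesselJ m (b2 * sqrt x) * sqrt x ^ m)
    (/ a * (b2 / (2 * a)) ^ m * (exp (- (b1 ^ 2 / (4 * a))) * exp (- (b2 ^ 2 / (4 * a))) *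
       alt_sum m (fun n => besselP (b2 ^ 2 / (4 * a)) n (b1 ^ 2 / (4 * a))))).
Proof.
  intros Ha.
  pose proof (is_RInt_0_inf_exp_pow_bessel_closed_form a ((b1 / 2) ^ 2) ((b2 / 2) ^ 2) m Ha
                (pow2_ge_0 _) (pow2_ge_0 _)) as HI.
  apply (is_RInt_gen_scal _ ((b2 / 2) ^ m)) in HI.
  replace ((b1 / 2) ^ 2 / a) with (b1 ^ 2 / (4 * a)) in HI by (field; lra).
  replace ((b2 / 2) ^ 2 / a) with (b2 ^ 2 / (4 * a)) in HI by (field; lra).
  replace (/ a * (b2 / (2 * a)) ^ m) with ((b2 / 2) ^ m * / a ^ S m).
  2:{ replace (b2 / (2 * a)) with (b2 / 2 * / a) by (field; lra).
      rewrite Rpow_mult_distr, pow_inv. simpl (a ^ S m). field. split; [apply pow_nonzero|]; lra. }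
  rewrite Rmult_assoc. refine (is_RInt_0_inf_ext _ _ _ _ HI). intros x Hx.
  rewrite !BesselJ_sqrt by lra. change (scal ?u ?v) with (u * v).
  replace (x ^ m) with (sqrt x ^ m * sqrt x ^ m)
    by (rewrite <- Rpow_mult_distr, sqrt_sqrt by lra; reflexivity).
  replace ((b1 / 2) ^ 2 * x) with (b1 ^ 2 / 4 * x) by field.
  replace ((b2 / 2) ^ 2 * x) with (b2 ^ 2 / 4 * x) by field.
  rewrite Ropp_mult_distr_l. ring.
Qed.

Lemma alt_sum_besselP_BesselI (a b1 b2 : R) (m : nat) : 0 < a -> b2 <> 0 ->
  alt_sum m (fun n => besselP (b2 ^ 2 / (4 * a)) n (b1 ^ 2 / (4 * a))) =
  sum_f_R0 (fun n => (-1) ^ n * Binomial.C m n * (b1 / b2) ^ n * BesselI n (b1 * b2 / (2 * a))) m.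
Proof.
  intros Ha Hb2. apply sum_eq. intros n Hn.
  replace (b1 ^ 2 / (4 * a)) with ((b1 / 2) ^ 2 / a) by (field; lra).
  replace (b2 ^ 2 / (4 * a)) with ((b2 / 2) ^ 2 / a) by (field; lra).
  rewrite INR_binom, besselP_BesselI by (exact Hn || lra).
  replace (b1 / 2 / (b2 / 2)) with (b1 / b2) by (field; lra).
  replace (2 * (b1 / 2) * (b2 / 2) / a) with (b1 * b2 / (2 * a)) by (field; lra).
  ring.
Qed.

Theorem mainTheorem15 (m : nat) (alpha beta1 beta2 : R) :
  (0 < m)%nat -> 0 < alpha -> 0 < beta1 -> 0 < beta2 ->
  let D := / alpha * exp (- beta2 ^ 2 / (4 * alpha)) *
           Derive_n (fun x => exp (- x) * sqrt (x / alpha) ^ m *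
                              BesselI m (beta2 * sqrt (x / alpha)))
                    m (beta1 ^ 2 / (4 * alpha)) in
  is_RInt_gen (fun x => exp (- alpha * x) * BesselJ 0 (beta1 * sqrt x) *
                        BesselJ m (beta2 * sqrt x) * sqrt x ^ m)
              (at_point 0) (Rbar_locally p_infty) D
  /\
  D = / alpha * (beta2 / (2 * alpha)) ^ m *
      exp (- (beta1 ^ 2 + beta2 ^ 2) / (4 * alpha)) *
      sum_f_R0 (fun n => (-1) ^ n * Binomial.C m n * (beta1 / beta2) ^ n *
                         BesselI n (beta1 * beta2 / (2 * alpha))) m.
Proof.
  (* The identity also holds for [m = 0]. *)
  intros _ Ha Hb1 Hb2 D.
  assert (HD : D = / alpha * (beta2 / (2 * alpha)) ^ m *
     (exp (- (beta1 ^ 2 / (4 * alpha))) * exp (- (beta2 ^ 2 / (4 * alpha))) *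
      alt_sum m (fun n => besselP (beta2 ^ 2 / (4 * alpha)) n (beta1 ^ 2 / (4 * alpha))))).
  { unfold D. rewrite Derive_n_exp_sqrt_BesselI by (try apply Rdiv_lt_0_compat; try apply pow_lt; lra).
    replace (- beta2 ^ 2 / (4 * alpha)) with (- (beta2 ^ 2 / (4 * alpha))) by (field; lra). ring. }
  rewrite HD. split.
  - now apply is_RInt_0_inf_exp_BesselJ_BesselJ.
  - rewrite alt_sum_besselP_BesselI by lra.
    replace (- (beta1 ^ 2 + beta2 ^ 2) / (4 * alpha))
      with (- (beta1 ^ 2 / (4 * alpha)) + - (beta2 ^ 2 / (4 * alpha))) by (field; lra).
    rewrite exp_plus. ring.
Qed.
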